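(* Let $m$ be an integer with $m \equiv 1 \pmod 4$ and $m \ge 5$, and let $n = 3^m - 1$. Then: (i) the ternary cyclic code $\mathcal{C}_{(0,3,m)}$ has length $n$ and dimension $(n+2)/2$, and the ternary cyclic code $\mathcal{C}_{(1,2,m)}$ has length $n$ and dimension $n/2$; (ii) the ternary cyclic code $\mathcal{C}_{(2,3,m)}$ has length $n$ and dimension $(n+2)/2$, and the ternary cyclic code $\mathcal{C}_{(0,1,m)}$ has length $n$ and dimension $n/2$.
   Context: Let $m \ge 2$ be an integer, $n = 3^m-1$, and let $\alpha$ be a primitive element of $\mathbb{F}_{3^m}$. For an integer $0 \le j \le n-1$ with $3$-adic expansion $j = \sum_{t=0}^{m-1} j_t 3^t$, $j_t \in \{0,1,2\}$, let $w_3(j) = \sum_{t=0}^{m-1} j_t$. For distinct $i_1, i_2 \in \{0,1,2,3\}$ let $T_{(i_1,i_2,m)} = \{1 \le j \le n-1 : w_3(j) \equiv i_1 \text{ or } i_2 \pmod 4\}$ and $g_{(i_1,i_2,m)}(x) = \prod_{j \in T_{(i_1,i_2,m)}} (x - \alpha^j) \in \mathbb{F}_3[x]$. $\mathcal{C}_{(i_1,i_2,m)}$ denotes the ternary cyclic code of length $n$ with generator polynomial $g_{(i_1,i_2,m)}(x)$, i.e. the ideal generated by $g_{(i_1,i_2,m)}(x)$ in $\mathbb{F}_3[x]/(x^n-1)$. *)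

From HB Require Import structures.
From mathcomp Require Import all_boot all_order all_algebra all_field.
Set Implicit Arguments. Unset Strict Implicit. Unset Printing Implicit Defensive.
Import GRing.Theory.
Local Open Scope ring_scope.

Definition w3 (m j : nat) : nat := (\sum_(t < m) (j %/ 3 ^ t) %% 3)%N.

Definition Tset (i1 i2 m : nat) : seq nat :=
  [seq j <- index_iota 1 (3 ^ m - 1)%N | ((w3 m j %% 4 == i1)%N || (w3 m j %% 4 == i2)%N)].

Definition gpoly (L : fieldExtType 'F_3) (alpha : L) (i1 i2 m : nat) : {poly L} :=
  \prod_(j <- Tset i1 i2 m) ('X - (alpha ^+ j)%:P).

(* codewords of the cyclic code of length n generated by g: the vector
   (c_0, ..., c_{n-1}) such that c_0 + c_1 x + ... + c_{n-1} x^{n-1} lies in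
   the ideal (g) of F_3[x]/(x^n - 1) *)
Definition is_codeword (n : nat) (g : {poly 'F_3}) (c : 'rV['F_3]_n) : Prop :=
  exists f : {poly 'F_3}, rVpoly c = (f * g) %% ('X^n - 1).

Definition code_has_dim (n : nat) (g : {poly 'F_3}) (k : nat) : Prop :=
  exists B : seq 'rV['F_3]_n,
    [/\ free B, size B = k & forall c, is_codeword g c <-> c \in <<B>>%VS].

From HB Require Import structures.
From mathcomp Require Import all_boot all_order all_algebra all_field.
From mathcomp Require Import zify.
Import GRing.Theory.

(* The cyclic code generated by a monic divisor g of X^n - 1 has dimension
   n - deg g, and the generator polynomial g_(i1,i2,m) has degree |T_(i1,i2,m)|,
   so everything reduces to counting exponents by digit sum.  Let N_r be the
   number of j < 3^m whose digit sum is r mod 4.  In the Gaussian integers,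
   (N_0 - N_2) + i (N_1 - N_3) = sum_j i^(w3 j) = (1 + i + i^2)^m = i^m, so for
   m = 1 mod 4 we get N_0 = N_2 and N_1 = N_3 + 1; together with
   N_0 + N_1 + N_2 + N_3 = 3^m this determines every |T_(i1,i2,m)|, once the
   two excluded exponents 0 and 3^m - 1 (digit sums 0 and 2m) are taken into
   account. *)


Lemma w3S m j : w3 m.+1 j = (j %% 3 + w3 m (j %/ 3))%N.
Proof.
rewrite /w3 big_ord_recl /= expn0 divn1; congr (_ + _)%N.
by apply: eq_bigr => t _; rewrite /bump /= add1n expnS divnMA.
Qed.

Lemma w3_3mulD m q d : d < 3 -> w3 m.+1 (3 * q + d) = d + w3 m q.
Proof.
move=> ltd3; rewrite w3S.
have -> : (3 * q + d) %% 3 = d by lia.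
by have -> : (3 * q + d) %/ 3 = q by lia.
Qed.

Lemma w3_0 m : w3 m 0 = 0.
Proof. by rewrite /w3 big1 // => t _; rewrite div0n mod0n. Qed.

Lemma w3_predX m : w3 m (3 ^ m - 1) = 2 * m.
Proof.
elim: m => [|m IHm]; first by rewrite /w3 big_ord0.
have pos3X := expn_gt0 3 m.
have -> : 3 ^ m.+1 - 1 = 3 * (3 ^ m - 1) + 2 by rewrite expnS; lia.
by rewrite w3_3mulD // IHm; lia.
Qed.

Lemma count_iota_mul3 (P : pred nat) K :
  count P (iota 0 (3 * K)) =
  count (fun q => P (3 * q)) (iota 0 K) + count (fun q => P (3 * q + 1)) (iota 0 K)
  + count (fun q => P (3 * q + 2)) (iota 0 K).
Proof.
elim: K => [//|K IHK].
rewrite mulnSr iotaD -(addn1 K) iotaD !count_cat IHK /= !add0n !addn0.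
by rewrite -[(3 * K).+2]addn2 -[(3 * K).+1]addn1; lia.
Qed.

Definition wcount m r := count (fun j => w3 m j %% 4 == r) (iota 0 (3 ^ m)).

Lemma wcount_shift m d r : d < 4 -> r < 4 ->
  count (fun q => (d + w3 m q) %% 4 == r) (iota 0 (3 ^ m)) = wcount m ((r + 4 - d) %% 4).
Proof. by move=> ltd4 ltr4; apply: eq_count => q /=; apply/eqP/eqP; lia. Qed.

Lemma wcountS m r : r < 4 ->
  wcount m.+1 r = wcount m r + wcount m ((r + 3) %% 4) + wcount m ((r + 2) %% 4).
Proof.
move=> ltr4; rewrite {1}/wcount expnS count_iota_mul3.
under eq_count => q do rewrite -[3 * q]addn0 w3_3mulD //.
under [X in _ + X + _]eq_count => q do rewrite w3_3mulD //.
under [X in _ + X]eq_count => q do rewrite w3_3mulD //.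
rewrite !wcount_shift //; congr (wcount m _ + wcount m _ + wcount m _); lia.
Qed.

Lemma wcountS4 m :
  [/\ wcount m.+1 0 = wcount m 0 + wcount m 3 + wcount m 2,
       wcount m.+1 1 = wcount m 1 + wcount m 0 + wcount m 3,
       wcount m.+1 2 = wcount m 2 + wcount m 1 + wcount m 0
     & wcount m.+1 3 = wcount m 3 + wcount m 2 + wcount m 1].
Proof. by rewrite !wcountS. Qed.

Lemma wcount_total m : wcount m 0 + wcount m 1 + wcount m 2 + wcount m 3 = 3 ^ m.
Proof.
elim: m => [|m IHm]; first by rewrite /wcount /w3 /= big_ord0.
by have [-> -> -> ->] := wcountS4 m; rewrite expnS -IHm; lia.
Qed.

(* The Gaussian integer sum_j i^(w3 m j) as a pair of coordinates; [rot90] is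
   multiplication by i = 1 + i + i^2, the contribution of one more digit. *)
Definition wbalance m : int * int :=
  let a r := Posz (wcount m r) in (a 0%N - a 2%N, a 1%N - a 3%N)%R.

Definition rot90 (v : int * int) : int * int := (- v.2, v.1)%R.

Lemma wbalance_iter m : wbalance m = iter m rot90 (1, 0)%R.
Proof.
elim: m => [|m IHm]; first by rewrite /wbalance /wcount /w3 /= !big_ord0.
rewrite iterS -IHm /wbalance /rot90 /=.
by have [-> -> -> ->] := wcountS4 m; congr (_, _); lia.
Qed.

Lemma iter_rot90_mod4 k v : iter k rot90 v = iter (k %% 4) rot90 v.
Proof.
have rot90_4 w : iter 4 rot90 w = w by case: w => x y; rewrite /rot90 /= !opprK.
rewrite {1}(divn_eq k 4) addnC iterD; congr iter.
by elim: (k %/ 4) => [//|q IHq]; rewrite mulSn iterD rot90_4.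
Qed.

Lemma wcount_mod4_1 m : m %% 4 = 1 ->
  wcount m 0 = wcount m 2 /\ wcount m 1 = wcount m 3 + 1.
Proof.
move=> m4; have := wbalance_iter m; rewrite iter_rot90_mod4 m4 /wbalance /rot90 /=.
by case=> ? ?; lia.
Qed.

(* The exponents 0 and 3^m - 1 are the two j < 3^m missing from [Tset]. *)
Lemma size_Tset i1 i2 m : i1 != i2 -> 0 < m ->
  let inT w := (w %% 4 == i1) || (w %% 4 == i2) in
  inT 0 + size (Tset i1 i2 m) + inT (2 * m) = wcount m i1 + wcount m i2.
Proof.
move=> ne12 m_gt0 inT.
have disj j : (w3 m j %% 4 == i1) && (w3 m j %% 4 == i2) = false.
  by apply/negbTE; apply: contra ne12 => /andP[/eqP <- /eqP <-].
rewrite /wcount -count_predUI (eq_count disj) count_pred0 addn0.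
have le3X : 3 <= 3 ^ m by rewrite -{1}(expn1 3) leq_pexp2l.
have -> : 3 ^ m = 1 + (3 ^ m - 2) + 1 by lia.
rewrite !iotaD !count_cat /= w3_0 add0n.
have -> : 1 + (3 ^ m - 2) = 3 ^ m - 1 by lia.
rewrite w3_predX size_filter /index_iota !addn0.
by have -> : 3 ^ m - 1 - 1 = 3 ^ m - 2 by lia.
Qed.

Lemma size_Tset_mod4_1 m : m %% 4 = 1 -> let n := 3 ^ m - 1 in
  [/\ n - size (Tset 0 3 m) = (n + 2) %/ 2, n - size (Tset 1 2 m) = n %/ 2,
      n - size (Tset 2 3 m) = (n + 2) %/ 2 & n - size (Tset 0 1 m) = n %/ 2].
Proof.
move=> m4 n; have [e02 e13] := wcount_mod4_1 m m4; have tot := wcount_total m.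
have m_gt0 : 0 < m by lia.
have two_m : 2 * m %% 4 = 2 by lia.
have := size_Tset 0 3 m isT m_gt0; have := size_Tset 1 2 m isT m_gt0.
have := size_Tset 2 3 m isT m_gt0; have := size_Tset 0 1 m isT m_gt0.
rewrite /= two_m /n /=; move=> *; split; lia.
Qed.

Local Open Scope ring_scope.

Section CyclicCodeDim.

Variables (n : nat) (g : {poly 'F_3}).
Hypotheses (n_gt0 : (0 < n)%N) (g_monic : g \is monic) (g_dvd : g %| 'X^n - 1).

Let k := (n - (size g).-1)%N.
Let basis : seq 'rV['F_3]_n := [seq poly_rV ('X^i * g) | i <- iota 0 k].

Let size_Xn_sub1 : size ('X^n - 1 : {poly 'F_3}) = n.+1.
Proof. by rewrite -polyC1 size_XnsubC. Qed.

Let size_g : (0 < size g <= n.+1)%N.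
Proof.
rewrite size_poly_gt0 monic_neq0 //= -size_Xn_sub1 dvdp_leq //.
by rewrite -size_poly_eq0 size_Xn_sub1.
Qed.

Let size_mulg (h : {poly 'F_3}) : (size h <= k)%N -> (size (h * g)%R <= n)%N.
Proof.
by move=> size_h; have := size_polyMleq h g; have := size_g; rewrite /k in size_h; lia.
Qed.

Let size_basis : size basis = k.
Proof. by rewrite size_map size_iota. Qed.

Let nth_basis i : (i < k)%N -> rVpoly basis`_i = 'X^i * g.
Proof.
move=> lt_ik; rewrite (nth_map 0%N) ?size_iota // nth_iota // add0n poly_rV_K //.
by apply: size_mulg; rewrite size_polyXn.
Qed.

Lemma codewordP (c : 'rV['F_3]_n) : is_codeword g c <-> g %| rVpoly c.
Proof.
split=> [[f ->] | g_dvd_c]; first by rewrite -dvdp_mod // dvdp_mull.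
exists (rVpoly c %/ g); rewrite divpK // modp_small // size_Xn_sub1 ltnS.
exact: size_poly.
Qed.

Lemma span_basisP (c : 'rV['F_3]_n) : c \in <<basis>>%VS <-> g %| rVpoly c.
Proof.
split=> [/coord_span -> | g_dvd_c].
  rewrite linear_sum; apply: (big_ind (fun p => g %| p)) => [|p q|i _].
  - exact: dvdp0.
  - exact: dvdp_add.
  by rewrite linearZ /= -mul_polyC dvdp_mull // nth_basis -?size_basis // dvdp_mull.
set h := rVpoly c %/ g; have c_hg : rVpoly c = h * g by rewrite divpK.
have size_h : (size h <= k)%N by rewrite size_divp ?monic_neq0 // leq_sub2r ?size_poly.
rewrite -[c]rVpolyK c_hg -[h]coefK poly_def mulr_suml linear_sum /=.
apply: rpred_sum => i _; rewrite -scalerAl linearZ /=; apply/rpredZ/memv_span.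
by apply: map_f; rewrite mem_iota add0n (leq_trans (ltn_ord i) size_h).
Qed.

Lemma free_basis : free basis.
Proof.
apply/(@freeP _ _ _ (in_tuple basis)) => a /(congr1 rVpoly); rewrite linear_sum linear0.
under eq_bigr => i _ do rewrite linearZ /= nth_basis -?size_basis // scalerAl.
rewrite -mulr_suml => /eqP; rewrite mulf_eq0 (negbTE (monic_neq0 g_monic)) orbF.
move=> /eqP sum_a0 j.
have := congr1 (coefp j) sum_a0; rewrite /= coef_sum coef0 (bigD1 j) //= big1.
  by rewrite addr0 coefZ coefXn eqxx mulr1.
by move=> i ne_ij; rewrite coefZ coefXn (inj_eq val_inj) eq_sym (negbTE ne_ij) mulr0.
Qed.

Lemma code_has_dim_monic_dvd : code_has_dim n g (n - (size g).-1).
Proof.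
exists basis; split; [exact: free_basis | exact: size_basis |].
by move=> c; rewrite codewordP span_basisP.
Qed.

End CyclicCodeDim.

Lemma prod_XsubC_prim_root_dvdp (F : fieldType) n (z : F) (s : seq nat) :
  n.-primitive_root z -> uniq s -> all (fun j => j < n)%N s ->
  \prod_(j <- s) ('X - (z ^+ j)%:P) %| 'X^n - 1.
Proof.
move=> z_prim s_uniq s_lt_n.
rewrite -(big_map (fun j => z ^+ j) xpredT (fun x => 'X - x%:P)).
apply: uniq_roots_dvdp.
  apply/allP => _ /mapP[j _ ->].
  by rewrite rootE !hornerE -exprM mulnC exprM (prim_expr_order z_prim) expr1n subrr.
rewrite uniq_rootsE map_inj_in_uniq // => i j /(allP s_lt_n) lt_in /(allP s_lt_n) lt_jn.
by move/eqP; rewrite (eq_prim_root_expr z_prim) !modn_small // => /eqP.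
Qed.

Section GeneratorPolynomial.

Variables (L : fieldExtType 'F_3) (alpha : L) (i1 i2 m : nat).

Lemma gpoly_monic : gpoly alpha i1 i2 m \is monic.
Proof. exact: monic_prod_XsubC. Qed.

Lemma size_gpoly : size (gpoly alpha i1 i2 m) = (size (Tset i1 i2 m)).+1.
Proof. exact: size_prod_XsubC. Qed.

Lemma gpoly_dvdp :
  (3 ^ m - 1).-primitive_root alpha -> gpoly alpha i1 i2 m %| 'X^(3 ^ m - 1) - 1.
Proof.
move=> alpha_prim; apply: prod_XsubC_prim_root_dvdp => //.
  by rewrite filter_uniq ?iota_uniq.
apply/allP => j; rewrite mem_filter mem_iota /index_iota => /andP[_].
by move=> /andP[j_ge1 j_lt] /=; lia.
Qed.

Lemma code_has_dim_gpoly (g : {poly 'F_3}) :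
  (3 ^ m - 1).-primitive_root alpha -> map_poly (GRing.in_alg L) g = gpoly alpha i1 i2 m ->
  code_has_dim (3 ^ m - 1) g (3 ^ m - 1 - size (Tset i1 i2 m)).
Proof.
move=> alpha_prim g_gpoly.
have <- : (size g).-1 = size (Tset i1 i2 m).
  by rewrite -(size_map_poly (GRing.in_alg L)) g_gpoly size_gpoly.
apply: code_has_dim_monic_dvd; first exact: prim_order_gt0 alpha_prim.
  by rewrite -(map_monic (GRing.in_alg L)) g_gpoly gpoly_monic.
rewrite -(dvdp_map (GRing.in_alg L)) g_gpoly rmorphB /= map_polyXn rmorph1.
exact: gpoly_dvdp.
Qed.

End GeneratorPolynomial.

Theorem theorem2 (m : nat) (L : fieldExtType 'F_3) (alpha : L)
  (g03 g12 g23 g01 : {poly 'F_3}) :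
  (m %% 4 = 1)%N -> (5 <= m)%N ->
  \dim {: L} = m ->
  (3 ^ m - 1).-primitive_root alpha ->
  map_poly (GRing.in_alg L) g03 = gpoly alpha 0 3 m ->
  map_poly (GRing.in_alg L) g12 = gpoly alpha 1 2 m ->
  map_poly (GRing.in_alg L) g23 = gpoly alpha 2 3 m ->
  map_poly (GRing.in_alg L) g01 = gpoly alpha 0 1 m ->
  let n := (3 ^ m - 1)%N in
  (code_has_dim n g03 ((n + 2) %/ 2) /\ code_has_dim n g12 (n %/ 2)) /\
  (code_has_dim n g23 ((n + 2) %/ 2) /\ code_has_dim n g01 (n %/ 2)).
Proof.
move=> m4 _ _ alpha_prim e03 e12 e23 e01 n.
have [s03 s12 s23 s01] := size_Tset_mod4_1 m m4.
split; split.
- by rewrite -s03; apply: code_has_dim_gpoly alpha_prim e03.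
- by rewrite -s12; apply: code_has_dim_gpoly alpha_prim e12.
- by rewrite -s23; apply: code_has_dim_gpoly alpha_prim e23.
- by rewrite -s01; apply: code_has_dim_gpoly alpha_prim e01.
Qed.
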